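(* Let $E$ be a fixed-point equation system whose interpretation restricts to a map $[\![E]\!]_{\le 1}\colon\mathbb{E}_{\le 1}(D)\to\mathbb{E}_{\le 1}(D)$. Then for every $d\in D$ and every $\epsilon>0$ there exists $\eta'\in\mathbb{E}(D)$ with $\mu[\![E]\!]_{\le 1}(d)-\epsilon<\eta'(d)\le\mu[\![E]\!]_{\le 1}(d)$ such that there exist: a fixed-point equation system $E'$ over the same predicate variables with $[\![E']\!]\le[\![E]\!]$; $u\in\mathbb{E}(D)$ with $[\![E']\!](u)\le u$; a function $r\colon D\to[0,\infty)$ with $(\mathsf{D}[\![E']\!])(r)+u\le r$; and such that $\eta'\le u$ and $\eta'\le[\![E']\!](\eta')$.
   Context: $\mathbb{E}(D)$ is the set of functions $D\to[0,\infty]$ with pointwise order and operations ($\infty+x=\infty$, $0\cdot\infty=0$, $r\cdot\infty=\infty$ for $r>0$); $\mathbb{E}_{\le 1}(D)$ is the subset of functions $D\to[0,1]$; for $x\ge y$ in $[0,\infty]$, $x-y$ is the least $z$ with $x=y+z$; $\mathbb{O}$ is the zero function; $(\mathsf{D}K)(\eta)=K(\eta)-K(\mathbb{O})$; $\mu$ denotes least fixed point. Quantitative formulas over predicate variables $X_1,\dots,X_n$ ($X_j$ of type $D_j\to\Omega$): $F ::= X_j(\tilde e)\mid t\mid F_1+F_2\mid t\cdot F\mid \mathbf{if}\ \varphi\ \mathbf{then}\ F_1\ \mathbf{else}\ F_2$ with $\tilde e$ expressions, $t$ a $[0,\infty)$-valued term, $\varphi$ boolean; interpreted by $[\![X_j(e)]\!](\eta)(v)=\eta_j([\![e]\!](v))$,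 $[\![t]\!](\eta)(v)=[\![t]\!](v)$, pointwise sum and scalar product, case distinction for conditionals. A fixed-point equation system $E=\{X_i(\tilde x_i)=_\mu F_i\}_{i=1}^n$ has interpretation $[\![E]\!](\eta)=([\![F_1]\!](\eta),\dots,[\![F_n]\!](\eta))$ on $\mathbb{E}(D)$, $D=\coprod_j D_j$. (The existence of the data $E',u,r$ with the stated conditions is what the paper calls provability of $\eta'\le\mu[\![E]\!]$ by its proof rule.) *)

(* values in [0,+oo] are extended reals \bar R
   (with nonnegativity imposed explicitly), R : realType. *)
From mathcomp Require Import all_boot all_order all_algebra.
From mathcomp Require Import reals constructive_ereal.
Set Implicit Arguments. Unset Strict Implicit. Unset Printing Implicit Defensive.
Import Order.TTheory GRing.Theory Num.Theory.
Local Open Scope ring_scope.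
Local Open Scope ereal_scope.

Section QFormulas.
Variables (R : realType) (n : nat) (D : 'I_n -> Type).

Definition dom := {j : 'I_n & D j}.

(* Quantitative formulas over predicate variables X_1..X_n (X_j : D_j -> Omega),
   whose free (argument) variables range over V.  Expressions, terms and
   boolean conditions are taken semantically (functions of the valuation v). *)
Inductive qform (V : Type) : Type :=
| QVar (j : 'I_n) (e : V -> D j)
| QConst (t : V -> R) of (forall v, (0 <= t v)%R)
| QAdd of qform V & qform V
| QScale (t : V -> R) of (forall v, (0 <= t v)%R) & qform V
| QIf of (V -> bool) & qform V & qform V.

Fixpoint qsem (V : Type) (F : qform V) (eta : dom -> \bar R) (v : V) : \bar R :=
  match F with
  | QVar j e => eta (existT _ j (e v))
  | QConst t _ => (t v)%:E
  | QAdd F1 F2 => qsem F1 eta v + qsem F2 eta v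
  | QScale t _ F1 => (t v)%:E * qsem F1 eta v
  | QIf phi F1 F2 => if phi v then qsem F1 eta v else qsem F2 eta v
  end.

Definition eqsys := forall i : 'I_n, qform (D i).

Definition semE (E : eqsys) (eta : dom -> \bar R) : dom -> \bar R :=
  fun d => let (i, x) := d in qsem (E i) eta x.

Definition isE (eta : dom -> \bar R) : Prop := forall d, 0 <= eta d.
Definition isE1 (eta : dom -> \bar R) : Prop := forall d, 0 <= eta d <= 1.

Definition fle (f g : dom -> \bar R) : Prop := forall d, f d <= g d.

Definition ozero : dom -> \bar R := fun _ => 0.

(* truncated difference on [0,+oo]: for x >= y, the least z with x = y + z *)
Definition edminus (x y : \bar R) : \bar R := if y == +oo then 0 else x - y.

Definition Dop (K : (dom -> \bar R) -> (dom -> \bar R)) (eta : dom -> \bar R)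
  : dom -> \bar R := fun d => edminus (K eta d) (K ozero d).

Definition is_lfp_le1 (E : eqsys) (m : dom -> \bar R) : Prop :=
  [/\ isE1 m, semE E m = m &
      forall x, isE1 x -> semE E x = x -> fle m x].

End QFormulas.

From mathcomp Require Import all_boot all_order all_algebra.
From mathcomp Require Import reals constructive_ereal.
From mathcomp Require Import classical_sets ereal.
From mathcomp Require Import lra.
Set Implicit Arguments. Unset Strict Implicit. Unset Printing Implicit Defensive.
Import Order.TTheory GRing.Theory Num.Theory.
Local Open Scope ring_scope.

(* The least fixed point m of [[E]] on [0,1]-valued functions is the supremum
   of the Kleene iterates [[E]]^k(O), because the semantics of quantitative
   formulas is monotone and omega-continuous; fix N with
   m(d) <= [[E]]^N(O)(d) + eps/2.  Damp the system to
   E' = x [[E]](O) + (1-x) [[E]] for a small x > 0.  Then [[E']] <= [[E]] and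
   the constant 1 is a prefixed point of [[E']].  Formulas are subhomogeneous
   (l F(eta) <= F(l eta) for l <= 1), so [[E]](1/x) <= 1/x, which yields
   (D[[E']])(1/x) + 1 <= 1/x.  Finally
   [[E']]^N(O) >= (1-x)^N [[E]]^N(O) >= [[E]]^N(O) - N x by Bernoulli's
   inequality, so eta' = [[E']]^N(O) is eps-close to m(d) once N x < eps/2. *)

Lemma bernoulli_inequality (R : realDomainType) (x : R) k :
  x <= 1 -> 1 - k%:R * x <= (1 - x) ^+ k.
Proof.
move=> x1; elim: k => [|k IH]; first by rewrite mul0r subr0 expr0.
have c0 : 0 <= 1 - x by rewrite subr_ge0.
have kxx : 0 <= k%:R * x ^+ 2 by rewrite mulr_ge0 ?sqr_ge0.
rewrite exprS mulrSr; nra.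
Qed.

Lemma exists_small_factor (R : realFieldType) (N : nat) (e : R) :
  0 < e -> exists2 x : R, 0 < x <= 1 & N%:R * x < e.
Proof.
move=> e0; have eN : 0 < e + N%:R by rewrite ltr_wpDr.
exists (e / (e + N%:R)); first by rewrite divr_gt0 //= ler_pdivrMr // mul1r lerDl.
rewrite mulrA ltr_pdivrMr //; nra.
Qed.

Local Open Scope ereal_scope.

Definition approx_by (R : realType) (a : nat -> \bar R) (b : \bar R) :=
  forall e : R, (0 < e)%R -> exists k, b <= a k + e%:E.

Section QformSemantics.
Variables (R : realType) (n : nat) (D : 'I_n -> Type).
Implicit Types (eta : dom D -> \bar R).

Lemma qsem_ge0 V (F : qform R D V) eta v : isE eta -> 0 <= qsem F eta v.
Proof.
move=> eta0.
elim: F v => [j e|t t0|F1 IH1 F2 IH2|t t0 F IH|phi F1 IH1 F2 IH2] v /=.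
- exact: eta0.
- by rewrite lee_fin.
- by rewrite adde_ge0.
- by rewrite mule_ge0 ?lee_fin.
- by case: (phi v).
Qed.

Lemma qsem_le_homo V (F : qform R D V) eta1 eta2 v :
  isE eta1 -> fle eta1 eta2 -> qsem F eta1 v <= qsem F eta2 v.
Proof.
move=> eta10 le12.
elim: F v => [j e|t t0|F1 IH1 F2 IH2|t t0 F IH|phi F1 IH1 F2 IH2] v /=.
- exact: le12.
- by [].
- by rewrite leeD.
- by rewrite lee_wpmul2l ?lee_fin.
- by case: (phi v).
Qed.

Lemma qsem_scale_le V (F : qform R D V) eta (l : R) v :
  isE eta -> (0 <= l <= 1)%R ->
  l%:E * qsem F eta v <= qsem F (fun y => l%:E * eta y) v.
Proof.
move=> eta0 /andP[l0 l1].
elim: F v => [j e|t t0|F1 IH1 F2 IH2|t t0 F IH|phi F1 IH1 F2 IH2] v /=.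
- by [].
- by rewrite -EFinM lee_fin ler_piMl.
- by rewrite ge0_muleDr ?qsem_ge0 // leeD.
- by rewrite muleCA lee_wpmul2l ?lee_fin.
- by case: (phi v).
Qed.

Lemma qsem_approx V (F : qform R D V) (f : nat -> dom D -> \bar R) s v :
  (forall k, isE (f k)) -> {homo f : k l / (k <= l)%N >-> fle k l} ->
  (forall y, approx_by (f ^~ y) (s y)) ->
  approx_by (fun k => qsem F (f k) v) (qsem F s v).
Proof.
move=> f0 f_homo s_approx.
have qsem_homo W (G : qform R D W) w k l :
    (k <= l)%N -> qsem G (f k) w <= qsem G (f l) w.
  by move=> kl; apply: qsem_le_homo => //; apply: f_homo.
elim: F v => [j e|t t0|F1 IH1 F2 IH2|t t0 F IH|phi F1 IH1 F2 IH2] v eps eps0 /=.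
- exact: s_approx.
- by exists 0%N; rewrite leeDl // lee_fin ltW.
- have [k1 h1] := IH1 v (eps / 2)%R ltac:(by rewrite divr_gt0).
  have [k2 h2] := IH2 v (eps / 2)%R ltac:(by rewrite divr_gt0).
  exists (maxn k1 k2); apply: le_trans (leeD h1 h2) _.
  rewrite addeACA -EFinD -splitr leeD2r // leeD // qsem_homo //.
    exact: leq_maxl.
  exact: leq_maxr.
- have tv1 : (0 < t v + 1)%R by rewrite ltr_wpDl.
  have [k h] := IH v (eps / (t v + 1))%R ltac:(by rewrite divr_gt0).
  exists k; apply: le_trans (lee_wpmul2l _ h) _; first by rewrite lee_fin.
  have eps_t0 : (0 <= eps / (t v + 1))%R by rewrite divr_ge0 ?ltW.
  rewrite ge0_muleDr ?qsem_ge0 ?lee_fin //; apply: leeD => //.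
  rewrite -EFinM lee_fin mulrA ler_pdivrMr //.
  have := t0 v; nra.
- by case: (phi v); [apply: IH1 | apply: IH2].
Qed.

Local Notation O := (ozero R (D:=D)).

Lemma semE_ge0 (E : eqsys R D) eta : isE eta -> isE (semE E eta).
Proof. by move=> eta0 [i v]; apply: qsem_ge0. Qed.

Lemma semE_le_homo (E : eqsys R D) eta1 eta2 :
  isE eta1 -> fle eta1 eta2 -> fle (semE E eta1) (semE E eta2).
Proof. by move=> eta10 le12 [i v]; apply: qsem_le_homo. Qed.

Lemma semE_scale_le (E : eqsys R D) eta (l : R) d : isE eta -> (0 <= l <= 1)%R ->
  l%:E * semE E eta d <= semE E (fun y => l%:E * eta y) d.
Proof. by case: d => i v; apply: qsem_scale_le. Qed.

Lemma semE_approx (E : eqsys R D) (f : nat -> dom D -> \bar R) s d :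
  (forall k, isE (f k)) -> {homo f : k l / (k <= l)%N >-> fle k l} ->
  (forall y, approx_by (f ^~ y) (s y)) ->
  approx_by (fun k => semE E (f k) d) (semE E s d).
Proof. by case: d => i v; apply: qsem_approx. Qed.

Fixpoint qform_at0 V (F : qform R D V) : qform R D V :=
  match F with
  | QVar _ _ => @QConst _ _ D V (fun _ => 0%R) (fun _ => lexx 0%R)
  | QConst _ t0 => QConst D t0
  | QAdd F1 F2 => QAdd (qform_at0 F1) (qform_at0 F2)
  | QScale _ t0 F1 => QScale t0 (qform_at0 F1)
  | QIf phi F1 F2 => QIf phi (qform_at0 F1) (qform_at0 F2)
  end.

Lemma qsem_at0 V (F : qform R D V) eta v :
  qsem (qform_at0 F) eta v = qsem F O v.
Proof.
by elim: F v => //= [F1 IH1 F2 IH2|t t0 F IH|phi F1 IH1 F2 IH2] v;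
  rewrite ?IH ?IH1 ?IH2.
Qed.

Definition damped (E : eqsys R D) (x : R)
    (x0 : (0 <= x)%R) (x1 : (0 <= 1 - x)%R) : eqsys R D :=
  fun i => QAdd (QScale (fun _ => x0) (qform_at0 (E i)))
                (QScale (fun _ => x1) (E i)).

Lemma semE_damped (E : eqsys R D) x (x0 : (0 <= x)%R) (x1 : (0 <= 1 - x)%R)
    eta d :
  semE (damped E x0 x1) eta d = x%:E * semE E O d + (1 - x)%:E * semE E eta d.
Proof. by case: d => i v /=; rewrite qsem_at0. Qed.

Definition preserves_le1 (E : eqsys R D) :=
  forall eta, isE1 eta -> isE1 (semE E eta).

Lemma isE1_cst1 : isE1 (fun _ : dom D => 1 : \bar R).
Proof. by move=> y; rewrite lexx lee01. Qed.

Lemma isE1_ozero : isE1 O.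
Proof. by move=> y; rewrite /ozero lexx lee01. Qed.

Lemma semE_cst_le (E : eqsys R D) (l : R) d :
  preserves_le1 E -> (1 <= l)%R ->
  semE E (fun _ => l%:E) d <= l%:E.
Proof.
move=> E_le1 l1; have l0 : (0 < l)%R := lt_le_trans ltr01 l1.
have l_inv : (0 <= l^-1 <= 1)%R by rewrite invr_ge0 ltW //= invf_le1.
have cst_ge0 : isE (fun _ : dom D => l%:E) by move=> y; rewrite lee_fin ltW.
have := semE_scale_le E d cst_ge0 l_inv.
have -> : (fun _ => l^-1%:E * l%:E) = (fun _ : dom D => 1 : \bar R).
  by apply: boolp.funext => y; rewrite -EFinM mulVf ?gt_eqF.
move=> /le_trans/(_ (andP (E_le1 _ isE1_cst1 d)).2).
have := semE_ge0 E cst_ge0 d; case: (semE E _ d) => [g||] //= g0.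
  by rewrite -EFinM !lee_fin -ler_pdivlMl ?invrK ?mulr1 ?invr_gt0.
by rewrite gt0_muley ?lte_fin ?invr_gt0.
Qed.

Definition kleene (E : eqsys R D) k := iter k (semE E) O.

Lemma kleene_ge0 E k : isE (kleene E k).
Proof. by elim: k => [|k IH] //=; apply: semE_ge0. Qed.

Lemma kleene_homo E : {homo kleene E : k l / (k <= l)%N >-> fle k l}.
Proof.
apply: homo_leq => [eta y|eta2 eta1 eta3 le12 le23 y|k]; first exact: lexx.
  exact: le_trans (le12 y) (le23 y).
elim: k => [|k IH] y /=; first exact: semE_ge0.
exact: (semE_le_homo E (kleene_ge0 E k) IH y).
Qed.

Lemma kleene_le E1 E2 k :
  (forall eta, isE eta -> fle (semE E1 eta) (semE E2 eta)) ->
  fle (kleene E1 k) (kleene E2 k).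
Proof.
move=> le12; elim: k => [|k IH] y //=.
have k0 := kleene_ge0 E1 k.
exact: le_trans (le12 _ k0 y) (semE_le_homo E2 k0 IH y).
Qed.

Lemma kleene_le1 E k : preserves_le1 E -> isE1 (kleene E k).
Proof.
by move=> E_le1; elim: k => [|k IH]; [exact: isE1_ozero | exact: E_le1].
Qed.

Lemma kleene_le_lfp E m k : is_lfp_le1 E m -> fle (kleene E k) m.
Proof.
case=> m1 mfix _; elim: k => [|k IH] y /=; first by case/andP: (m1 y).
by rewrite -mfix; apply: semE_le_homo IH y; apply: kleene_ge0.
Qed.

Lemma ge0_le1_fin_num (z : \bar R) : 0 <= z <= 1 -> z \is a fin_num.
Proof. by case/andP=> z0 z1; rewrite ge0_fin_numE // (le_lt_trans z1) ?ltry. Qed.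

Lemma lfp_le1_approx E m d : preserves_le1 E -> is_lfp_le1 E m ->
  approx_by (fun k => kleene E k d) (m d).
Proof.
move=> E_le1 Em; have [m1 _ m_least] := Em.
pose s y := ereal_sup (range (fun k => kleene E k y)).
have kleene_le_s k y : kleene E k y <= s y by apply: ereal_sup_ubound; exists k.
have s1 : isE1 s.
  move=> y; rewrite (le_trans (kleene_ge0 E 0 y) (kleene_le_s 0%N y)) /=.
  by apply: ge_ereal_sup => _ [k _ <-]; case/andP: (kleene_le1 k E_le1 y).
have s_approx y : approx_by (fun k => kleene E k y) (s y).
  move=> e e0; have s_fin := ge0_le1_fin_num (s1 y).
  have /ereal_sup_gt[_ [k _ <-] lt_k] : s y - e%:E < s y.
    by rewrite lteBlDr // lteDl.
  by exists k; rewrite -leeBlDr // ltW.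
have s_fix : semE E s = s.
  apply: boolp.funext => y; apply/eqP; rewrite eq_le; apply/andP; split.
    apply/lee_addgt0Pr => e e0.
    have [k le_k] := semE_approx E y (kleene_ge0 E) (kleene_homo E) s_approx e0.
    exact: le_trans le_k (leeD (kleene_le_s k.+1 y) (lexx _)).
  apply: ge_ereal_sup => _ [[|k] _ <-] /=.
    by apply: semE_ge0 => z; case/andP: (s1 z).
  exact: (semE_le_homo E (kleene_ge0 E k) (kleene_le_s k) y).
move=> e e0; have [k le_k] := s_approx d e e0; exists k.
exact: le_trans (m_least s s1 s_fix d) le_k.
Qed.

Section Damping.
Variables (E : eqsys R D) (x : R).
Hypotheses (x_ge0 : (0 <= x)%R) (onemx_ge0 : (0 <= 1 - x)%R).
Hypothesis E_le1 : preserves_le1 E.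
Local Notation E' := (damped E x_ge0 onemx_ge0).

Lemma damped_le eta : isE eta -> fle (semE E' eta) (semE E eta).
Proof.
move=> eta0 y; rewrite semE_damped.
have le0 := semE_le_homo E (fun _ => lexx 0) eta0 y.
apply: le_trans (leeD (lee_wpmul2l _ le0) (lexx _)) _; first by rewrite lee_fin.
by rewrite -ge0_muleDl ?lee_fin // -EFinD subrKC mul1e.
Qed.

Lemma damped_cst1_le : fle (semE E' (fun _ => 1)) (fun _ => 1).
Proof.
move=> y; rewrite semE_damped.
have /andP[_ b1] := E_le1 isE1_ozero y.
have /andP[_ g1] := E_le1 isE1_cst1 y.
apply: le_trans (leeD (lee_wpmul2l _ b1) (lee_wpmul2l _ g1)) _;
  try by rewrite lee_fin.
by rewrite !mule1 -EFinD subrKC.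
Qed.

Lemma Dop_damped_le : (0 < x)%R ->
  fle (fun y => Dop (semE E') (fun _ => x^-1%:E) y + 1) (fun _ => x^-1%:E).
Proof.
move=> x_gt0 y.
have r_ge1 : (1 <= x^-1)%R by rewrite invr_ge1 ?unitf_gt0 // -subr_ge0.
have /andP[b0 b1] := E_le1 isE1_ozero y.
have g_le := semE_cst_le y E_le1 r_ge1.
have g0 : 0 <= semE E (fun _ => x^-1%:E) y.
  by apply: semE_ge0 => z; rewrite lee_fin ltW // (lt_le_trans ltr01).
(* [[E']](O) = [[E]](O), so the difference is (1-x)([[E]](1/x) - [[E]](O)),
   and (1-x)/x = 1/x - 1. *)
rewrite /Dop /edminus !semE_damped -ge0_muleDl ?lee_fin // -EFinD subrKC mul1e.
move: b0 b1 g0 g_le.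
case: (semE E O y) => [b||] //; case: (semE E _ y) => [g||] //.
rewrite !lee_fin /= => b0 b1 g0 g_le.
have xV : (x * x^-1 = 1)%R by rewrite mulfV ?gt_eqF.
have : ((1 - x) * g <= (1 - x) * x^-1)%R by rewrite ler_wpM2l.
have : (0 <= (1 - x) * b)%R by rewrite mulr_ge0.
nra.
Qed.

Lemma damped_kleene_ge k d :
  ((1 - x) ^+ k)%:E * kleene E k d <= kleene E' k d.
Proof.
elim: k d => [|k IH] d /=; first by rewrite /ozero mule0.
have ck : (0 <= (1 - x) ^+ k <= 1)%R.
  by rewrite exprn_ge0 ?exprn_ile1 // lerBlDr lerDl.
have ck_kleene0 : isE (fun z => ((1 - x) ^+ k)%:E * kleene E k z).
  by move=> z; rewrite mule_ge0 ?lee_fin ?exprn_ge0 ?kleene_ge0.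
rewrite semE_damped exprS EFinM -muleA.
apply: le_trans (leeDr _ _); last by rewrite mule_ge0 ?lee_fin ?semE_ge0.
apply: lee_wpmul2l; first by rewrite lee_fin.
apply: le_trans (semE_scale_le E d (kleene_ge0 E k) ck) _.
exact: (semE_le_homo E ck_kleene0 IH d).
Qed.

Lemma damped_kleene_ge_sub k d :
  kleene E k d - (k%:R * x)%:E <= kleene E' k d.
Proof.
apply: le_trans (damped_kleene_ge k d).
have := kleene_le1 k E_le1 d; case: (kleene E k d) => [g||] //; last first.
  by case/andP=> _; rewrite leye_eq.
rewrite !lee_fin => /andP[g0 g1].
have bern : (1 - k%:R * x <= (1 - x) ^+ k)%R.
  by apply: bernoulli_inequality; rewrite -subr_ge0.
have kx0 : (0 <= k%:R * x)%R by rewrite mulr_ge0.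
nra.
Qed.

End Damping.
End QformSemantics.

Theorem theorem4p9 (R : realType) (n : nat) (D : 'I_n -> Type)
  (E : eqsys R D)
  (Hrestr : forall eta : dom D -> \bar R, isE1 eta -> isE1 (semE E eta))
  (m : dom D -> \bar R) (Hm : is_lfp_le1 E m) :
  forall (d : dom D) (eps : R), (0 < eps)%R ->
  exists eta' : dom D -> \bar R,
    [/\ isE eta', m d - eps%:E < eta' d, eta' d <= m d &
      exists (E' : eqsys R D) (u : dom D -> \bar R) (r : dom D -> R),
        (forall eta, isE eta -> fle (semE E' eta) (semE E eta)) /\
        (isE u /\ fle (semE E' u) u) /\
        (forall x, (0 <= r x)%R) /\
        fle (fun x => Dop (semE E') (fun y => (r y)%:E) x + u x)
            (fun x => (r x)%:E) /\
        fle eta' u /\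
        fle eta' (semE E' eta')].
Proof.
move=> d eps eps0; have [m1 _ _] := Hm.
have eps2 : (0 < eps / 2)%R by rewrite divr_gt0.
have [N le_N] := lfp_le1_approx d Hrestr Hm eps2.
have [x /andP[x_gt0 x_le1] Nx] := exists_small_factor N eps2.
have x_ge0 := ltW x_gt0.
have onemx_ge0 : (0 <= 1 - x)%R by rewrite subr_ge0.
pose E' := damped E x_ge0 onemx_ge0.
have E'_le := damped_le E x_ge0 onemx_ge0.
have eta'_le_m y : kleene E' N y <= m y.
  exact: le_trans (kleene_le N E'_le y) (kleene_le_lfp N Hm y).
exists (kleene E' N); split; [exact: kleene_ge0 | | exact: eta'_le_m |].
  apply: lt_le_trans (damped_kleene_ge_sub x_ge0 onemx_ge0 Hrestr N d).
  move: le_N; have := ge0_le1_fin_num (kleene_le1 N Hrestr d).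
  have := ge0_le1_fin_num (m1 d).
  case: (m d) (kleene E N d) => [md||] // [g||] // _ _.
  rewrite -EFinD -!EFinB lte_fin lee_fin; lra.
exists E', (fun _ => 1), (fun _ => x^-1)%R.
split; first exact: E'_le.
split; first by split; [move=> y; exact: lee01 | exact: damped_cst1_le].
split; first by move=> _; rewrite invr_ge0.
split; first exact: Dop_damped_le.
split; last exact: (kleene_homo E' (leqnSn N)).
by move=> y; apply: le_trans (eta'_le_m y) _; case/andP: (m1 y).
Qed.
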